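(* Consider the fully discrete finite element scheme described in the context. If $Q_h^{n-1}$ and $Q_h^n$ are trace-free and symmetric (at every point), then $Q_h^{n+1}$ computed by the scheme is trace-free and symmetric.
   Context: Setting: $\Omega\subset\mathbb{R}^d$ ($d\in\{2,3\}$) bounded polygonal/polyhedral (or $C^2$) domain; constants $L_1>0$, $L_2+L_3\ge0$, $a,b\in\mathbb{R}$, $c>0$, $\sigma>0$, $A_0$ a constant such that $\frac a2\operatorname{tr}(Q^2)-\frac b3\operatorname{tr}(Q^3)+\frac c4\operatorname{tr}^2(Q^2)+A_0>0$ for all symmetric trace-free $Q$. $f(Q)=aQ-b[Q^2-\frac1d\operatorname{tr}(Q^2)I]+c\operatorname{tr}(Q^2)Q$, $r(Q)=\sqrt{2(\frac a2\operatorname{tr}(Q^2)-\frac b3\operatorname{tr}(Q^3)+\frac c4\operatorname{tr}^2(Q^2)+A_0)}$, $P(Q)=f(Q)/r(Q)$. Discretization: $\mathfrak T_h$ a conforming shape-regular quasi-uniform triangulation of $\Omega$ with mesh size $h$, interior nodes $z\in\mathcal N^h$ with piecewise linear hat functions $\varphi_z$. $\mathcal S^h=\{W\in H^1_0(\Omega;\mathbb{R}^{d\times d})$: each entry piecewise linear$\}$, $\mathcal T^h=\{U\in H^1_0(\Omega)$: piecewise linear$\}$. $\mathcal I_h$ is nodal piecewise linear interpolation. Mass-lumped inner product: $\langle W^1,W^2\rangle_h=\sum_{z}\gamma_zW^1(z):W^2(z)$, $\gamma_z=\int_\Omega\varphi_z\,dx$, with norm $\|\cdot\|_h$, and similarly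 for scalars. For $W^1,W^2\in\mathcal S^h$, $\langle\alpha(W^1),W^2\rangle_h:=-\int_\Omega\sum_{i,j,k}(\partial_kW^1_{jk}\partial_iW^2_{ij}+\partial_kW^1_{ik}\partial_jW^2_{ij})dx+\frac2d\int_\Omega\sum_{i,j,k,\ell}\partial_\ell W^1_{k\ell}\partial_kW^2_{ij}\delta_{ij}\,dx$. Time step $\Delta t>0$, $D_t^+g^n=(g^{n+1}-g^n)/\Delta t$, $D_t^-g^n=(g^n-g^{n-1})/\Delta t$, $g^{n+1/2}=(g^{n+1}+g^n)/2$, and $\langle\alpha_h^{n+1/2},\Phi\rangle_h:=\frac12(\langle\alpha(Q_h^{n+1}),\Phi\rangle_h+\langle\alpha(Q_h^n),\Phi\rangle_h)$. Scheme: find $Q_h^{n+1}\in\mathcal S^h$, $r_h^{n+1}\in\mathcal T^h$ such that for all $\Phi_h\in\mathcal S^h$, $\psi_h\in\mathcal T^h$: $\langle D_t^+Q_h^n,\Phi_h\rangle_h=-\sigma\langle D_t^-D_t^+Q_h^n,\Phi_h\rangle_h-L_1\langle\nabla Q_h^{n+1/2},\nabla\Phi_h\rangle_{L^2}+\frac{L_2+L_3}{2}\langle\alpha_h^{n+1/2},\Phi_h\rangle_h-\langle r_h^{n+1/2}P(Q_h^n),\Phi_h\rangle_h$, $\langle r_h^{n+1}-r_h^n,\psi_h\rangle_h=\langle P(Q_h^n):(Q_h^{n+1}-Q_h^n),\psi_h\rangle_h$, where the mass-lumped product of the nonlinear terms is evaluated nodewise. *)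

(* Fully discrete P1 finite element scheme with mass lumping,
   written through nodal values on a simplicial mesh. *)
From HB Require Import structures.
From mathcomp Require Import all_boot all_order all_algebra.
Set Implicit Arguments. Unset Strict Implicit. Unset Printing Implicit Defensive.
Import Order.TTheory GRing.Theory Num.Theory.
Local Open Scope ring_scope.

Record mesh (R : rcfType) (d : nat) := Mesh {
  node : finType;
  elem : finType;
  vert : elem -> 'I_d.+1 -> node;
  pos : node -> 'rV[R]_d;
  interior : pred node }.

Section FE.
Variables (R : rcfType) (d : nat) (M : mesh R d).

Definition Bmat (e : elem M) : 'M[R]_d :=
  \matrix_(i < d, k < d) (pos (vert e (lift ord0 i)) 0 k - pos (vert e ord0) 0 k).

Definition vol (e : elem M) : R := `|\det (Bmat e)| / (d`!)%:R.

(* gradient (constant on e) of the barycentric coordinate / hat function of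
   the j-th vertex of e:  lambda_{i+1}(x) = ((x - x_0) B^{-1})_i,
   lambda_0 = 1 - sum_i lambda_{i+1}. *)
Definition hatgrad (e : elem M) (j : 'I_d.+1) : 'rV[R]_d :=
  match unlift ord0 j with
  | Some i => \row_k (invmx (Bmat e)) k i
  | None => - \sum_(i < d) \row_k (invmx (Bmat e)) k i
  end.

(* k-th partial derivative on e of the piecewise linear function with nodal values u *)
Definition dpart (e : elem M) (u : node M -> R) (k : 'I_d) : R :=
  \sum_(j < d.+1) u (vert e j) * hatgrad e j 0 k.

Definition dpartM (e : elem M) (W : node M -> 'M[R]_d) (i j k : 'I_d) : R :=
  dpart e (fun z => W z i j) k.

Definition inSh (W : node M -> 'M[R]_d) : Prop := forall z, ~~ interior z -> W z = 0.
Definition inTh (u : node M -> R) : Prop := forall z, ~~ interior z -> u z = 0.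

(* gamma_z = int_Omega phi_z dx *)
Definition gamma (z : node M) : R :=
  \sum_(e : elem M | [exists j, vert e j == z]) vol e / (d.+1)%:R.

Definition frob (A B : 'M[R]_d) : R := \sum_(i < d) \sum_(j < d) A i j * B i j.

Definition lumpM (W1 W2 : node M -> 'M[R]_d) : R :=
  \sum_(z : node M | interior z) gamma z * frob (W1 z) (W2 z).
Definition lumpS (u1 u2 : node M -> R) : R :=
  \sum_(z : node M | interior z) gamma z * (u1 z * u2 z).

Definition gradL2 (W1 W2 : node M -> 'M[R]_d) : R :=
  \sum_(e : elem M) vol e *
    \sum_(i < d) \sum_(j < d) \sum_(k < d) dpartM e W1 i j k * dpartM e W2 i j k.

Definition alphaF (W1 W2 : node M -> 'M[R]_d) : R :=
  \sum_(e : elem M) vol e *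
    ( - (\sum_(i < d) \sum_(j < d) \sum_(k < d)
           (dpartM e W1 j k k * dpartM e W2 i j i + dpartM e W1 i k k * dpartM e W2 i j j))
      + 2%:R / d%:R * (\sum_(i < d) \sum_(j < d) \sum_(k < d) \sum_(l < d)
           dpartM e W1 k l l * dpartM e W2 i j k * (i == j)%:R)).

End FE.

Section Bulk.
Variables (R : rcfType) (d : nat) (a b c A0 : R).

Definition trQ2 (Q : 'M[R]_d) : R := \tr (Q *m Q).
Definition trQ3 (Q : 'M[R]_d) : R := \tr (Q *m Q *m Q).

Definition bulk (Q : 'M[R]_d) : R :=
  a / 2%:R * trQ2 Q - b / 3%:R * trQ3 Q + c / 4%:R * (trQ2 Q) ^+ 2 + A0.

Definition fQ (Q : 'M[R]_d) : 'M[R]_d :=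
  a *: Q - b *: (Q *m Q - (d%:R^-1 * trQ2 Q) *: 1%:M) + (c * trQ2 Q) *: Q.

Definition rQ (Q : 'M[R]_d) : R := Num.sqrt (2%:R * bulk Q).

Definition PQ (Q : 'M[R]_d) : 'M[R]_d := (rQ Q)^-1 *: fQ Q.
End Bulk.

(* Let qdefect X := (X - X^T)/2 + (tr X / d) I; it is the Frobenius-orthogonal
   projection onto the complement of the symmetric trace-free matrices, so a
   matrix X is symmetric and trace-free iff qdefect X = 0.  Test the first
   equation of the scheme with Phi := qdefect Q^{n+1}.  As Q^{n-1}, Q^n and
   P(Q^n) are symmetric and trace-free, and qdefect commutes with the nodal
   gradient, the discrete time derivatives and the L1 term turn into positive
   multiples of |Phi|_h^2 and |grad Phi|^2, the bulk term vanishes, and so does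
   the alpha term: it only sees the symmetric part of grad Phi, which is
   isotropic, and there its two contributions cancel.  Hence
   (1/dt + sigma/dt^2) |Phi|_h^2 + L1/2 |grad Phi|^2 = 0, so Phi vanishes at
   all interior nodes. *)

From HB Require Import structures.
From mathcomp Require Import all_boot all_order all_algebra.
From mathcomp Require Import ring lra.
Import Order.TTheory GRing.Theory Num.Theory.
Set Implicit Arguments. Unset Strict Implicit. Unset Printing Implicit Defensive.
Local Open Scope ring_scope.

Section Frobenius.
Variables (R : rcfType) (d : nat).
Implicit Types A B C : 'M[R]_d.

Lemma frobC A B : frob A B = frob B A.
Proof. by apply: eq_bigr => i _; apply: eq_bigr => j _; rewrite mulrC. Qed.

Lemma frobDl A B C : frob (A + B) C = frob A C + frob B C.
Proof.
rewrite /frob -big_split; apply: eq_bigr => i _ /=.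
by rewrite -big_split; apply: eq_bigr => j _; rewrite mxE mulrDl.
Qed.

Lemma frobZl a A B : frob (a *: A) B = a * frob A B.
Proof.
rewrite /frob mulr_sumr; apply: eq_bigr => i _.
by rewrite mulr_sumr; apply: eq_bigr => j _; rewrite mxE mulrA.
Qed.

Lemma frobBl A B C : frob (A - B) C = frob A C - frob B C.
Proof. by rewrite frobDl -scaleN1r frobZl mulN1r. Qed.

Lemma frob_trmx A B : frob A^T B^T = frob A B.
Proof.
by rewrite /frob exchange_big; do 2![apply: eq_bigr => ? _]; rewrite !mxE.
Qed.

Lemma frob1l A : frob 1%:M A = \tr A.
Proof.
apply: eq_bigr => i _; rewrite (bigD1 i) //= big1 => [|j ji].
  by rewrite !mxE eqxx mul1r addr0.
by rewrite !mxE eq_sym (negbTE ji) mul0r.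
Qed.

Lemma frob_ge0 A : 0 <= frob A A.
Proof. by do 2![apply: sumr_ge0 => ? _]; rewrite -expr2 sqr_ge0. Qed.

Lemma frob_eq0 A : frob A A = 0 -> A = 0.
Proof.
move=> A0; apply/matrixP => i j; rewrite mxE.
have sq_ge0 i' j' : 0 <= A i' j' * A i' j' by rewrite -expr2 sqr_ge0.
have row_ge0 i' : true -> 0 <= \sum_j' A i' j' * A i' j'.
  by move=> _; apply: sumr_ge0 => j' _.
have row0 := psumr_eq0P row_ge0 A0 (i := i) isT.
have /eqP := psumr_eq0P (fun j' _ => sq_ge0 i j') row0 (i := j) isT.
by rewrite -expr2 sqrf_eq0 => /eqP.
Qed.

End Frobenius.

Section QDefect.
Variables (R : rcfType) (d : nat).
Hypothesis d_gt0 : (0 < d)%N.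
Implicit Types X Y S : 'M[R]_d.

Definition qtensor X : Prop := X^T = X /\ \tr X = 0.

Definition qdefect X : 'M[R]_d := 2%:R^-1 *: (X - X^T) + (d%:R^-1 * \tr X) *: 1%:M.

Lemma qdefectE X i j :
  qdefect X i j = 2%:R^-1 * (X i j - X j i) + d%:R^-1 * \tr X * (i == j)%:R.
Proof. by rewrite !mxE. Qed.

Fact qdefect_is_linear : linear qdefect.
Proof.
move=> a X Y; apply/matrixP => i j.
by rewrite !(mxE, qdefectE) linearD linearZ /=; ring.
Qed.

HB.instance Definition _ :=
  GRing.isLinear.Build R 'M[R]_d 'M[R]_d _ qdefect qdefect_is_linear.

Let d_neq0 : d%:R != 0 :> R.
Proof. by rewrite pnatr_eq0 -lt0n. Qed.

Lemma mxtrace_qdefect X : \tr (qdefect X) = \tr X.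
Proof.
rewrite linearD !linearZ /= linearB /= mxtrace_tr subrr mulr0 add0r mxtrace1.
by rewrite mulrAC mulVf ?mul1r.
Qed.

Lemma qtensorP X : qtensor X <-> qdefect X = 0.
Proof.
split=> [[XT trX] | qX0].
  by rewrite /qdefect XT trX subrr mulr0 scaler0 scale0r addr0.
split; last by rewrite -mxtrace_qdefect qX0 mxtrace0.
apply/matrixP => i j; apply/eqP; rewrite mxE -subr_eq0.
have -> : X j i - X i j = qdefect X j i - qdefect X i j.
  by rewrite !qdefectE eq_sym; field.
by rewrite qX0 !mxE subrr.
Qed.

Lemma qdefect_sym_part X i j :
  qdefect X i j + qdefect X j i = 2%:R / d%:R * \tr X * (i == j)%:R.
Proof. by rewrite !qdefectE eq_sym; ring. Qed.

Lemma qdefect_id X : qdefect (qdefect X) = qdefect X.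
Proof.
apply/matrixP => i j; rewrite qdefectE mxtrace_qdefect !qdefectE eq_sym.
by field.
Qed.

Lemma frob_qtensor_qdefect S Y : qtensor S -> frob S (qdefect Y) = 0.
Proof.
case=> ST trS; rewrite frobC frobDl !frobZl frob1l trS mulr0 addr0 frobBl.
by rewrite -{2}ST frob_trmx subrr mulr0.
Qed.

Lemma frob_qdefect X Y : frob X (qdefect Y) = frob (qdefect X) (qdefect Y).
Proof.
rewrite -{1}(subrK (qdefect X) X) frobDl frob_qtensor_qdefect ?add0r //.
by apply/qtensorP; rewrite linearB /= qdefect_id subrr.
Qed.

Lemma qtensor_fQ a b c Q : qtensor Q -> qtensor (fQ a b c Q).
Proof.
case=> QT trQ; have QQT : (Q *m Q)^T = Q *m Q by rewrite trmx_mul QT.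
rewrite /fQ /trQ2; move: (Q *m Q) QQT => P PT; split.
  have Qji i j : Q j i = Q i j by rewrite -[in LHS]QT mxE.
  have Pji i j : P j i = P i j by rewrite -[in LHS]PT mxE.
  by apply/matrixP => i j; rewrite !mxE Qji Pji (eq_sym j i).
by rewrite !raddfD /= !raddfN /= !linearZ /= mxtrace1 trQ; field.
Qed.

Lemma qtensor_PQ a b c A0 Q : qtensor Q -> qtensor (PQ a b c A0 Q).
Proof.
move=> /(qtensor_fQ a b c) /qtensorP qf0.
by apply/qtensorP; rewrite [qdefect _]linearZ /= qf0 scaler0.
Qed.

End QDefect.

Section AlphaDensity.
Variables (R : comUnitRingType) (d : nat).
Implicit Types p q : 'I_d -> 'I_d -> 'I_d -> R.

Lemma sum_mul_delta (F : 'I_d -> R) j : \sum_i F i * (i == j)%:R = F j.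
Proof.
rewrite (bigD1 j) //= eqxx mulr1 big1 ?addr0 // => i /negbTE ->.
by rewrite mulr0.
Qed.

(* The integrand of alphaF on one element, for the arrays p i j k, q i j k of
   the partial derivatives d_k W_ij of its two arguments. *)
Definition alpha_density p q : R :=
  - (\sum_i \sum_j \sum_k (p j k k * q i j i + p i k k * q i j j))
  + 2%:R / d%:R * (\sum_i \sum_j \sum_k \sum_l p k l l * q i j k * (i == j)%:R).

Lemma alpha_density_eq0 p q :
  (forall i j k, q i j k + q j i k = 2%:R / d%:R * (\sum_l q l l k) * (i == j)%:R) ->
  alpha_density p q = 0.
Proof.
rewrite /alpha_density => q_sym.
set v := fun j => \sum_k p j k k; set t := fun k => \sum_l q l l k.
have -> : \sum_i \sum_j \sum_k (p j k k * q i j i + p i k k * q i j j)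
    = \sum_j v j * (2%:R / d%:R * t j).
  transitivity (\sum_i \sum_j v j * q i j i + \sum_i \sum_j v i * q i j j).
    rewrite -big_split; apply: eq_bigr => i _; rewrite -big_split.
    by apply: eq_bigr => j _; rewrite big_split /= !mulr_suml.
  rewrite exchange_big -big_split; apply: eq_bigr => j _; rewrite -big_split /=.
  under eq_bigr => i _ do rewrite -mulrDr q_sym mulrA.
  exact: sum_mul_delta.
have -> : \sum_i \sum_j \sum_k \sum_l p k l l * q i j k * (i == j)%:R
    = \sum_k v k * t k.
  transitivity (\sum_i \sum_j (\sum_k v k * q i j k) * (i == j)%:R).
    do 2![apply: eq_bigr => ? _]; rewrite mulr_suml.
    by apply: eq_bigr => k _; rewrite /v !mulr_suml.
  under eq_bigr => i _ do under eq_bigr => j _ do rewrite eq_sym.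
  under eq_bigr => i _ do rewrite sum_mul_delta.
  by rewrite exchange_big; apply: eq_bigr => k _; rewrite -mulr_sumr.
by rewrite mulr_sumr -sumrN -big_split big1 //= => k _; ring.
Qed.

End AlphaDensity.

Section LumpedForms.
Variables (R : rcfType) (d : nat) (M : mesh R d).
Implicit Types (W Q : node M -> 'M[R]_d) (e : elem M) (z : node M).

Definition dpartmx e W (k : 'I_d) : 'M[R]_d :=
  \sum_(j < d.+1) hatgrad e j 0 k *: W (vert e j).

Lemma dpartME e W i j k : dpartM e W i j k = dpartmx e W k i j.
Proof. by rewrite summxE; apply: eq_bigr => l _; rewrite mxE mulrC. Qed.

Lemma gradL2E W1 W2 :
  gradL2 W1 W2 = \sum_e vol e * \sum_k frob (dpartmx e W1 k) (dpartmx e W2 k).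
Proof.
apply: eq_bigr => e _; congr (_ * _); rewrite [RHS]exchange_big.
apply: eq_bigr => i _; rewrite [RHS]exchange_big.
by do 2![apply: eq_bigr => ? _]; rewrite !dpartME.
Qed.

Lemma vol_ge0 e : 0 <= vol e.
Proof. by rewrite divr_ge0. Qed.

Lemma gamma_ge0 z : 0 <= gamma z.
Proof. by apply: sumr_ge0 => e _; rewrite divr_ge0 ?vol_ge0. Qed.

Lemma gamma_gt0 z : (forall e, \det (Bmat e) != 0) ->
  (exists e j, vert e j = z) -> 0 < gamma z.
Proof.
move=> det_neq0 [e [j ejz]]; rewrite /gamma (bigD1 e) /=; last first.
  by apply/existsP; exists j; rewrite ejz.
rewrite ltr_wpDr ?sumr_ge0 // => [e' _|]; first by rewrite divr_ge0 ?vol_ge0.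
by rewrite !divr_gt0 ?normr_gt0 ?ltr0n ?fact_gt0.
Qed.

Lemma lumpM_ge0 W : 0 <= lumpM W W.
Proof. by apply: sumr_ge0 => z _; rewrite mulr_ge0 ?gamma_ge0 ?frob_ge0. Qed.

Lemma gradL2_ge0 W : 0 <= gradL2 W W.
Proof.
rewrite gradL2E; apply: sumr_ge0 => e _.
by rewrite mulr_ge0 ?vol_ge0 ?sumr_ge0 // => k _; rewrite frob_ge0.
Qed.

Lemma lumpM_eq0 W : (forall z, interior z -> 0 < gamma z) ->
  lumpM W W = 0 -> forall z, interior z -> W z = 0.
Proof.
move=> gamma_pos WW0 z zint; apply: frob_eq0.
have term_ge0 z' : interior z' -> 0 <= gamma z' * frob (W z') (W z').
  by move=> _; rewrite mulr_ge0 ?gamma_ge0 ?frob_ge0.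
have /eqP := psumr_eq0P term_ge0 WW0 zint.
by rewrite mulf_eq0 gt_eqF ?gamma_pos //= => /eqP.
Qed.

Lemma qdefect_dpartmx e W k :
  qdefect (dpartmx e W k) = dpartmx e (fun z => qdefect (W z)) k.
Proof. by rewrite linear_sum; apply: eq_bigr => j _; rewrite linearZ. Qed.

Hypothesis d_gt0 : (0 < d)%N.

Lemma lumpM_qdefect a W Q : (forall z, qdefect (W z) = a *: qdefect (Q z)) ->
  lumpM W (fun z => qdefect (Q z)) =
  a * lumpM (fun z => qdefect (Q z)) (fun z => qdefect (Q z)).
Proof.
move=> qW; rewrite /lumpM mulr_sumr; apply: eq_bigr => z _.
by rewrite frob_qdefect // qW frobZl mulrCA.
Qed.

Lemma gradL2_qdefect a W Q : (forall z, qdefect (W z) = a *: qdefect (Q z)) ->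
  gradL2 W (fun z => qdefect (Q z)) =
  a * gradL2 (fun z => qdefect (Q z)) (fun z => qdefect (Q z)).
Proof.
move=> qW; rewrite !gradL2E mulr_sumr; apply: eq_bigr => e _.
rewrite [RHS]mulrCA [in RHS]mulr_sumr; congr (_ * _); apply: eq_bigr => k _.
rewrite -qdefect_dpartmx frob_qdefect //.
have -> : qdefect (dpartmx e W k) = a *: qdefect (dpartmx e Q k).
  rewrite !qdefect_dpartmx scaler_sumr; apply: eq_bigr => j _.
  by rewrite qW !scalerA mulrC.
by rewrite frobZl.
Qed.

Lemma alphaF_qdefect W Q : alphaF W (fun z => qdefect (Q z)) = 0.
Proof.
rewrite /alphaF big1 // => e _.
rewrite -/(alpha_density (dpartM e W) (dpartM e (fun z => qdefect (Q z)))).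
rewrite alpha_density_eq0 ?mulr0 // => i j k; rewrite !dpartME.
under eq_bigr => l _ do rewrite dpartME.
by rewrite -qdefect_dpartmx qdefect_sym_part -[in LHS](mxtrace_qdefect d_gt0).
Qed.

Lemma qtensor_of_lumpM_qdefect Q : (forall e, \det (Bmat e) != 0) ->
  (forall z, interior z -> exists e j, vert e j = z) -> inSh Q ->
  lumpM (fun z => qdefect (Q z)) (fun z => qdefect (Q z)) = 0 ->
  forall z, qtensor (Q z).
Proof.
move=> det_neq0 interior_vert Q_Sh N0 z.
case: (boolP (interior z)) => [zint | /Q_Sh ->].
  apply/(qtensorP d_gt0); apply: lumpM_eq0 N0 z zint => z' /interior_vert.
  exact: gamma_gt0.
by rewrite /qtensor trmx0 mxtrace0.
Qed.

End LumpedForms.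

Lemma energy_balance_eq0 (R : realFieldType) (dt sigma L1 N G : R) :
  0 < dt -> 0 <= sigma -> 0 <= L1 -> 0 <= N -> 0 <= G ->
  dt^-1 * N = - sigma * ((dt ^+ 2)^-1 * N) - L1 * (2%:R^-1 * G) -> N = 0.
Proof.
move=> dt_gt0 sigma_ge0 L1_ge0 N_ge0 G_ge0 balance.
have inertia_ge0 : 0 <= sigma * ((dt ^+ 2)^-1 * N).
  by rewrite !mulr_ge0 // invr_ge0 exprn_ge0 // ltW.
have diffusion_ge0 : 0 <= L1 * (2%:R^-1 * G) by rewrite !mulr_ge0 // invr_ge0.
have : dt^-1 * N <= 0 by lra.
by rewrite pmulr_rle0 ?invr_gt0 // => N_le0; apply/le_anti/andP.
Qed.

Theorem lemma4p1 (R : rcfType) (d : nat) (M : mesh R d)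
  (L1 L2 L3 a b c sigma A0 dt : R)
  (Qm1 Q0 Q1 : node M -> 'M[R]_d) (r0 r1 : node M -> R) :
  (d = 2%N \/ d = 3%N) ->
  (* mesh: nondegenerate simplices, each interior node is a mesh vertex *)
  (forall e : elem M, \det (Bmat e) != 0) ->
  (forall z : node M, interior z -> exists e : elem M, exists j, vert e j = z) ->
  (* parameters *)
  0 < L1 -> 0 <= L2 + L3 -> 0 < c -> 0 < sigma -> 0 < dt ->
  (forall Q : 'M[R]_d, Q^T = Q -> \tr Q = 0 -> 0 < bulk a b c A0 Q) ->
  (* unknowns in the discrete spaces *)
  inSh Qm1 -> inSh Q0 -> inSh Q1 -> inTh r0 -> inTh r1 ->
  (* Q^{n-1}, Q^n trace-free and symmetric *)
  (forall z, (Qm1 z)^T = Qm1 z /\ \tr (Qm1 z) = 0) ->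
  (forall z, (Q0 z)^T = Q0 z /\ \tr (Q0 z) = 0) ->
  (* the scheme *)
  (forall Phi : node M -> 'M[R]_d, inSh Phi ->
     lumpM (fun z => dt^-1 *: (Q1 z - Q0 z)) Phi =
       - sigma * lumpM (fun z => (dt ^+ 2)^-1 *: (Q1 z - 2%:R *: Q0 z + Qm1 z)) Phi
       - L1 * gradL2 (fun z => 2%:R^-1 *: (Q1 z + Q0 z)) Phi
       + (L2 + L3) / 2%:R * (2%:R^-1 * (alphaF Q1 Phi + alphaF Q0 Phi))
       - lumpM (fun z => (2%:R^-1 * (r1 z + r0 z)) *: PQ a b c A0 (Q0 z)) Phi) ->
  (forall psi : node M -> R, inTh psi ->
     lumpS (fun z => r1 z - r0 z) psi =
       lumpS (fun z => frob (PQ a b c A0 (Q0 z)) (Q1 z - Q0 z)) psi) ->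
  forall z, (Q1 z)^T = Q1 z /\ \tr (Q1 z) = 0.
Proof.
move=> d23 det_neq0 interior_vert L1_gt0 _ _ sigma_gt0 dt_gt0 _ _ _ Q1_Sh _ _
  Qm1_q Q0_q scheme _.
have d_gt0 : (0 < d)%N by case: d23 => ->.
have qdefect_Q0 z : qdefect (Q0 z) = 0 by apply/qtensorP.
have qdefect_Qm1 z : qdefect (Qm1 z) = 0 by apply/qtensorP.
pose Phi z := qdefect (Q1 z).
have Phi_Sh : inSh Phi by move=> z /Q1_Sh Q1z0; rewrite /Phi Q1z0 linear0.
have time_term :
    lumpM (fun z => dt^-1 *: (Q1 z - Q0 z)) Phi = dt^-1 * lumpM Phi Phi.
  apply: lumpM_qdefect => // z.
  by rewrite [qdefect _]linearZ /= [qdefect _]linearB /= qdefect_Q0 subr0.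
have inertia_term :
    lumpM (fun z => (dt ^+ 2)^-1 *: (Q1 z - 2%:R *: Q0 z + Qm1 z)) Phi =
    (dt ^+ 2)^-1 * lumpM Phi Phi.
  apply: lumpM_qdefect => // z; rewrite [qdefect _]linearZ /= [qdefect _]linearD /=.
  rewrite [qdefect _]linearB /= [qdefect (_ *: _)]linearZ /= qdefect_Q0 qdefect_Qm1.
  by rewrite scaler0 subr0 addr0.
have elastic_term :
    gradL2 (fun z => 2%:R^-1 *: (Q1 z + Q0 z)) Phi = 2%:R^-1 * gradL2 Phi Phi.
  apply: gradL2_qdefect => // z.
  by rewrite [qdefect _]linearZ /= [qdefect _]linearD /= qdefect_Q0 addr0.
have bulk_term :
    lumpM (fun z => (2%:R^-1 * (r1 z + r0 z)) *: PQ a b c A0 (Q0 z)) Phi =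
    0 * lumpM Phi Phi.
  apply: lumpM_qdefect => // z; rewrite [qdefect _]linearZ /= scale0r.
  have /(qtensorP d_gt0) -> := qtensor_PQ d_gt0 a b c A0 (Q0_q z).
  by rewrite scaler0.
have := scheme Phi Phi_Sh.
rewrite time_term inertia_term elastic_term bulk_term !alphaF_qdefect //.
rewrite addr0 !mulr0 addr0 mul0r subr0 => balance.
apply: qtensor_of_lumpM_qdefect => //; apply: energy_balance_eq0 balance => //.
- exact: ltW.
- exact: ltW.
- exact: lumpM_ge0.
- exact: gradL2_ge0.
Qed.
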